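(* Let $\mathcal{C}$ be a monoidal category and $A$ an algebra in $\mathcal{C}$ such that both the category of left $A$-modules in $\mathcal{C}$ and the category of right $A$-modules in $\mathcal{C}$ have more than one isomorphism class of objects. Then $A$ is a left (resp. right) monadic division algebra in $\mathcal{C}$ if and only if $A$ is a left (resp. right) essential division algebra in $\mathcal{C}$.
   Context: Monoidal categories are strict. For an algebra $(A,m_A,u_A)$ in $\mathcal{C}$ there are monads $(A\otimes-)$ with multiplication $m_A\otimes\mathrm{id}$ and unit $u_A\otimes\mathrm{id}$, and $(-\otimes A)$ with multiplication $\mathrm{id}\otimes m_A$ and unit $\mathrm{id}\otimes u_A$. A monad $T$ on a category $\mathcal{A}$ is adjunction-trivial if its Kleisli category $\mathcal{A}_T$ and its Eilenberg–Moore category $\mathcal{A}^T$ are equivalent (i.e., the comparison functor $\mathcal{A}_T\to\mathcal{A}^T$ is an equivalence). An algebra $A$ satisfying the hypothesis above (more than one isoclass of left and of right modules) is a left (resp. right) monadic division algebra if the monad $(A\otimes-)$ (resp. $(-\otimes A)$) on $\mathcal{C}$ is adjunction-trivial, and a left (resp. right) essential division algebra if the free module functor $(A\otimes-):\mathcal{C}\to A\text{-}\mathsf{Mod}(\mathcal{C})$, $X\mapsto(A\otimes X,m_A\otimes\mathrm{id}_X)$ (resp. $(-\otimes A):\mathcal{C}\to\mathsf{Mod}\text{-}A(\mathcal{C})$, $X\mapsto(X\otimes A,\mathrm{id}_X\otimes m_A)$) is essentially surjective. *)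

From Stdlib Require Import ProofIrrelevance.


(** * Categories, functors, equivalences *)

Record Category : Type := {
  ob :> Type;
  hom : ob -> ob -> Type;
  idm : forall a, hom a a;
  comp : forall {a b c}, hom b c -> hom a b -> hom a c;
  comp_idl : forall a b (f : hom a b), comp (idm b) f = f;
  comp_idr : forall a b (f : hom a b), comp f (idm a) = f;
  comp_assoc : forall a b c d (h : hom c d) (g : hom b c) (f : hom a b),
      comp h (comp g f) = comp (comp h g) f }.

Arguments hom {_} _ _.
Arguments idm {_} _.
Arguments comp {_ _ _ _} _ _.
Arguments comp_idl {_ _ _} _.
Arguments comp_idr {_ _ _} _.
Arguments comp_assoc {_ _ _ _ _} _ _ _.

Notation "g ∘ f" := (comp g f) (at level 40, left associativity).

Lemma comp_rew {C : Category} {a b c d : C} {x : hom c d} {y : hom b c}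
  {z : hom b d} : x ∘ y = z -> forall f : hom a b, x ∘ (y ∘ f) = z ∘ f.
Proof. intros H f. rewrite comp_assoc, H. reflexivity. Qed.

Record Functor (C D : Category) : Type := {
  fobj :> C -> D;
  fmap : forall {a b}, hom a b -> hom (fobj a) (fobj b);
  fmap_id : forall a, fmap (idm a) = idm (fobj a);
  fmap_comp : forall a b c (g : hom b c) (f : hom a b),
      fmap (g ∘ f) = fmap g ∘ fmap f }.

Arguments fmap {_ _} _ {_ _} _.
Arguments fmap_id {_ _} _ _.
Arguments fmap_comp {_ _} _ {_ _ _} _ _.

Definition is_iso {C : Category} {a b : C} (f : hom a b) : Prop :=
  exists g : hom b a, g ∘ f = idm a /\ f ∘ g = idm b.

Definition isomorphic {C : Category} (a b : C) : Prop :=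
  exists f : hom a b, is_iso f.

Definition essentially_surjective {C D : Category} (F : Functor C D) : Prop :=
  forall d : D, exists c : C, isomorphic (F c) d.

Definition is_equivalence {C D : Category} (F : Functor C D) : Prop :=
  exists G : Functor D C,
    (exists eta : forall a : C, hom (G (F a)) a,
        (forall (a b : C) (f : hom a b), f ∘ eta a = eta b ∘ fmap G (fmap F f))
        /\ forall a, is_iso (eta a)) /\
    (exists eps : forall d : D, hom (F (G d)) d,
        (forall (d e : D) (g : hom d e), g ∘ eps d = eps e ∘ fmap F (fmap G g))
        /\ forall d, is_iso (eps d)).

Lemma sig_eq {A : Type} (P : A -> Prop) (x y : {a : A | P a}) :
  proj1_sig x = proj1_sig y -> x = y.
Proof.
  destruct x as [x px], y as [y py]; simpl; intros ->.
  rewrite (proof_irrelevance _ px py). reflexivity.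
Qed.

(** * Monoidal categories *)

Record MonoidalData : Type := {
  mcat :> Category;
  tens : mcat -> mcat -> mcat;
  tensm : forall {a b c d : mcat}, hom a b -> hom c d -> hom (tens a c) (tens b d);
  munit : mcat;
  assoc : forall a b c : mcat, hom (tens (tens a b) c) (tens a (tens b c));
  assoc_inv : forall a b c : mcat, hom (tens a (tens b c)) (tens (tens a b) c);
  lunit : forall a : mcat, hom (tens munit a) a;
  lunit_inv : forall a : mcat, hom a (tens munit a);
  runit : forall a : mcat, hom (tens a munit) a;
  runit_inv : forall a : mcat, hom a (tens a munit) }.

Arguments tens {_} _ _.
Arguments tensm {_ _ _ _ _} _ _.
Arguments assoc {_} _ _ _.
Arguments assoc_inv {_} _ _ _.
Arguments lunit {_} _.
Arguments lunit_inv {_} _.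
Arguments runit {_} _.
Arguments runit_inv {_} _.

Record MonoidalLaws (M : MonoidalData) : Prop := {
  tensm_id : forall a b : M, tensm (idm a) (idm b) = idm (tens a b);
  tensm_comp : forall (a b c a' b' c' : M) (f : hom a b) (g : hom b c)
      (f' : hom a' b') (g' : hom b' c'),
      tensm (g ∘ f) (g' ∘ f') = tensm g g' ∘ tensm f f';
  assoc_invl : forall a b c : M, assoc_inv a b c ∘ assoc a b c = idm _;
  assoc_invr : forall a b c : M, assoc a b c ∘ assoc_inv a b c = idm _;
  assoc_nat : forall (a a' b b' c c' : M) (f : hom a a') (g : hom b b') (h : hom c c'),
      assoc a' b' c' ∘ tensm (tensm f g) h = tensm f (tensm g h) ∘ assoc a b c;
  lunit_invl : forall a : M, lunit_inv a ∘ lunit a = idm _;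
  lunit_invr : forall a : M, lunit a ∘ lunit_inv a = idm _;
  lunit_nat : forall (a b : M) (f : hom a b),
      f ∘ lunit a = lunit b ∘ tensm (idm (munit M)) f;
  runit_invl : forall a : M, runit_inv a ∘ runit a = idm _;
  runit_invr : forall a : M, runit a ∘ runit_inv a = idm _;
  runit_nat : forall (a b : M) (f : hom a b),
      f ∘ runit a = runit b ∘ tensm f (idm (munit M));
  pentagon : forall a b c d : M,
      tensm (idm a) (assoc b c d) ∘ assoc a (tens b c) d ∘ tensm (assoc a b c) (idm d)
      = assoc a b (tens c d) ∘ assoc (tens a b) c d;
  triangle : forall a b : M,
      tensm (idm a) (lunit b) ∘ assoc a (munit M) b = tensm (runit a) (idm b);
  (* The following two identities are consequences of the pentagon and
     triangle axioms (Kelly 1964); they are listed for convenience. *)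
  lunit_tens : forall a b : M,
      lunit (tens a b) ∘ assoc (munit M) a b = tensm (lunit a) (idm b);
  runit_tens : forall a b : M,
      tensm (idm a) (runit b) ∘ assoc a b (munit M) = runit (tens a b) }.

Arguments tensm_id {_} _ _ _.
Arguments tensm_comp {_} _ {_ _ _ _ _ _} _ _ _ _.
Arguments assoc_invl {_} _ _ _ _.
Arguments assoc_invr {_} _ _ _ _.
Arguments assoc_nat {_} _ {_ _ _ _ _ _} _ _ _.
Arguments lunit_invl {_} _ _.
Arguments lunit_invr {_} _ _.
Arguments lunit_nat {_} _ {_ _} _.
Arguments runit_invl {_} _ _.
Arguments runit_invr {_} _ _.
Arguments runit_nat {_} _ {_ _} _.
Arguments pentagon {_} _ _ _ _ _.
Arguments triangle {_} _ _ _.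
Arguments lunit_tens {_} _ _ _.
Arguments runit_tens {_} _ _ _.

Record MonoidalCategory : Type := {
  mdata :> MonoidalData;
  mlaws : MonoidalLaws mdata }.

Definition id_to_hom {C : Category} {a b : C} (e : a = b) : hom a b :=
  match e in _ = b' return hom a b' with eq_refl => idm a end.

Definition is_strict (M : MonoidalCategory) : Prop :=
  (forall a b c : M, exists e : tens (tens a b) c = tens a (tens b c),
      assoc a b c = id_to_hom e) /\
  (forall a : M, exists e : tens (munit M) a = a, lunit a = id_to_hom e) /\
  (forall a : M, exists e : tens a (munit M) = a, runit a = id_to_hom e).

(** * Monads, Kleisli and Eilenberg–Moore categories *)

Record Monad (C : Category) : Type := {
  mT :> Functor C C;
  meta : forall a : C, hom a (mT a);
  mmu : forall a : C, hom (mT (mT a)) (mT a);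
  meta_nat : forall (a b : C) (f : hom a b), fmap mT f ∘ meta a = meta b ∘ f;
  mmu_nat : forall (a b : C) (f : hom a b),
      fmap mT f ∘ mmu a = mmu b ∘ fmap mT (fmap mT f);
  mmu_assoc : forall a : C, mmu a ∘ fmap mT (mmu a) = mmu a ∘ mmu (mT a);
  mmu_etal : forall a : C, mmu a ∘ meta (mT a) = idm (mT a);
  mmu_etar : forall a : C, mmu a ∘ fmap mT (meta a) = idm (mT a) }.

Arguments mT {_} _.
Arguments meta {_} _ _.
Arguments mmu {_} _ _.
Arguments meta_nat {_} _ {_ _} _.
Arguments mmu_nat {_} _ {_ _} _.
Arguments mmu_assoc {_} _ _.
Arguments mmu_etal {_} _ _.
Arguments mmu_etar {_} _ _.

Section MonadCats.
Context {C : Category} (T : Monad C).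

Definition kl_comp {a b c : C} (g : hom b (T c)) (f : hom a (T b)) : hom a (T c) :=
  mmu T c ∘ fmap T g ∘ f.

Lemma kl_idl (a b : C) (f : hom a (T b)) : kl_comp (meta T b) f = f.
Proof. unfold kl_comp. rewrite mmu_etar, comp_idl. reflexivity. Qed.

Lemma kl_idr (a b : C) (f : hom a (T b)) : kl_comp f (meta T a) = f.
Proof.
  unfold kl_comp. rewrite <- comp_assoc, meta_nat, comp_assoc, mmu_etal, comp_idl.
  reflexivity.
Qed.

Lemma kl_assoc (a b c d : C) (h : hom c (T d)) (g : hom b (T c)) (f : hom a (T b)) :
  kl_comp h (kl_comp g f) = kl_comp (kl_comp h g) f.
Proof.
  unfold kl_comp. rewrite !fmap_comp.
  repeat rewrite <- comp_assoc.
  rewrite (comp_rew (mmu_assoc T d)).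
  repeat rewrite <- comp_assoc.
  rewrite (comp_rew (mmu_nat T h)). repeat rewrite <- comp_assoc.
  reflexivity.
Qed.

Definition Kleisli : Category :=
  {| ob := C; hom := fun a b => hom a (T b); idm := meta T;
     comp := @kl_comp; comp_idl := kl_idl; comp_idr := kl_idr;
     comp_assoc := kl_assoc |}.

Record EMAlg : Type := {
  em_ob : C;
  em_act : hom (T em_ob) em_ob;
  em_unit : em_act ∘ meta T em_ob = idm em_ob;
  em_assoc : em_act ∘ fmap T em_act = em_act ∘ mmu T em_ob }.

Definition em_hom (X Y : EMAlg) : Type :=
  { f : hom (em_ob X) (em_ob Y) | f ∘ em_act X = em_act Y ∘ fmap T f }.

Program Definition em_id (X : EMAlg) : em_hom X X := exist _ (idm _) _.
Next Obligation. intros X; cbv beta. rewrite fmap_id, comp_idl, comp_idr. reflexivity. Qed.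

Program Definition em_comp {X Y Z : EMAlg} (g : em_hom Y Z) (f : em_hom X Y) :
  em_hom X Z := exist _ (proj1_sig g ∘ proj1_sig f) _.
Next Obligation.
  intros X Y Z [g Hg] [f Hf]; simpl.
  rewrite fmap_comp, <- comp_assoc, Hf, comp_assoc, Hg, comp_assoc. reflexivity.
Qed.

Program Definition EilenbergMoore : Category :=
  {| ob := EMAlg; hom := em_hom; idm := em_id; comp := @em_comp |}.
Next Obligation. intros. apply sig_eq; simpl. apply comp_idl. Qed.
Next Obligation. intros. apply sig_eq; simpl. apply comp_idr. Qed.
Next Obligation. intros. apply sig_eq; simpl. apply comp_assoc. Qed.

Program Definition free_em (a : C) : EMAlg :=
  {| em_ob := T a; em_act := mmu T a |}.
Next Obligation. intros a. apply mmu_etal. Qed.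
Next Obligation. intros a. apply mmu_assoc. Qed.

Program Definition comparison_hom (a b : C) (f : hom a (T b)) :
  em_hom (free_em a) (free_em b) := exist _ (mmu T b ∘ fmap T f) _.
Next Obligation.
  intros a b f; simpl. rewrite fmap_comp.
  repeat rewrite <- comp_assoc.
  rewrite (comp_rew (mmu_assoc T b)).
  rewrite <- comp_assoc, (mmu_nat T f). reflexivity.
Qed.

Program Definition comparison : Functor Kleisli EilenbergMoore :=
  {| fobj := free_em; fmap := comparison_hom |}.
Next Obligation. intros a. apply sig_eq; simpl. apply mmu_etar. Qed.
Next Obligation.
  intros a b c g f. apply sig_eq; simpl. unfold kl_comp.
  rewrite !fmap_comp. repeat rewrite <- comp_assoc.
  rewrite (comp_rew (mmu_assoc T c)). repeat rewrite <- comp_assoc.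
  rewrite (comp_rew (mmu_nat T g)). repeat rewrite <- comp_assoc.
  reflexivity.
Qed.

End MonadCats.

Definition adjunction_trivial {C : Category} (T : Monad C) : Prop :=
  is_equivalence (comparison T).

(** * Algebras and modules in a monoidal category *)

Section Monoidal.
Context {M : MonoidalCategory}.

Let L := mlaws M.
Lemma t_id (a b : M) : tensm (idm a) (idm b) = idm (tens a b).
Proof. exact (tensm_id L a b). Qed.
Lemma t_comp (a b c a' b' c' : M) (f : hom a b) (g : hom b c)
      (f' : hom a' b') (g' : hom b' c') :
  tensm g g' ∘ tensm f f' = tensm (g ∘ f) (g' ∘ f').
Proof. symmetry. exact (tensm_comp L f g f' g'). Qed.

Lemma inv_rel1 {a b c : M} (f : hom a b) (g : hom b c) (h : hom a c)
  (g' : hom c b) (h' : hom c a) :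
  g ∘ f = h -> g' ∘ g = idm b -> h ∘ h' = idm c -> f ∘ h' = g'.
Proof.
  intros H1 H2 H3. rewrite <- (comp_idl f), <- H2.
  repeat rewrite <- comp_assoc. rewrite (comp_rew H1), H3, comp_idr. reflexivity.
Qed.
Lemma inv_rel2 {a b c : M} (f : hom a b) (g : hom b c) (h : hom a c)
  (f' : hom b a) (g' : hom c b) (h' : hom c a) :
  g ∘ f = h -> f ∘ f' = idm b -> g ∘ g' = idm c -> h' ∘ h = idm a -> f' ∘ g' = h'.
Proof.
  intros H1 H2 H3 H4. rewrite <- (comp_idl (f' ∘ g')), <- H4, <- H1.
  rewrite <- !comp_assoc, (comp_rew H2), comp_idl, H3, comp_idr. reflexivity.
Qed.

Record Algebra : Type := {
  alg : M;
  amul : hom (tens alg alg) alg;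
  aunit : hom (munit M) alg;
  amul_assoc : amul ∘ tensm amul (idm alg) = amul ∘ tensm (idm alg) amul ∘ assoc alg alg alg;
  amul_unitl : amul ∘ tensm aunit (idm alg) = lunit alg;
  amul_unitr : amul ∘ tensm (idm alg) aunit = runit alg }.

Context (A : Algebra).
Notation AA := (alg A).
Notation m := (amul A).
Notation u := (aunit A).

Record LModule : Type := {
  lmod : M;
  lact : hom (tens AA lmod) lmod;
  lact_assoc : lact ∘ tensm m (idm lmod) = lact ∘ tensm (idm AA) lact ∘ assoc AA AA lmod;
  lact_unit : lact ∘ tensm u (idm lmod) = lunit lmod }.

Definition lmod_hom (X Y : LModule) : Type :=
  { f : hom (lmod X) (lmod Y) | f ∘ lact X = lact Y ∘ tensm (idm AA) f }.

Program Definition lmod_id (X : LModule) : lmod_hom X X := exist _ (idm _) _.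
Next Obligation. intros X; cbv beta. rewrite t_id, comp_idl, comp_idr. reflexivity. Qed.

Program Definition lmod_comp {X Y Z : LModule} (g : lmod_hom Y Z) (f : lmod_hom X Y) :
  lmod_hom X Z := exist _ (proj1_sig g ∘ proj1_sig f) _.
Next Obligation.
  intros X Y Z [g Hg] [f Hf]; simpl.
  rewrite <- comp_assoc, Hf, comp_assoc, Hg, <- comp_assoc, t_comp, comp_idl.
  reflexivity.
Qed.

Program Definition LMod : Category :=
  {| ob := LModule; hom := lmod_hom; idm := lmod_id; comp := @lmod_comp |}.
Next Obligation. intros. apply sig_eq; simpl. apply comp_idl. Qed.
Next Obligation. intros. apply sig_eq; simpl. apply comp_idr. Qed.
Next Obligation. intros. apply sig_eq; simpl. apply comp_assoc. Qed.

Record RModule : Type := {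
  rmod : M;
  ract : hom (tens rmod AA) rmod;
  ract_assoc : ract ∘ tensm (idm rmod) m = ract ∘ tensm ract (idm AA) ∘ assoc_inv rmod AA AA;
  ract_unit : ract ∘ tensm (idm rmod) u = runit rmod }.

Definition rmod_hom (X Y : RModule) : Type :=
  { f : hom (rmod X) (rmod Y) | f ∘ ract X = ract Y ∘ tensm f (idm AA) }.

Program Definition rmod_id (X : RModule) : rmod_hom X X := exist _ (idm _) _.
Next Obligation. intros X; cbv beta. rewrite t_id, comp_idl, comp_idr. reflexivity. Qed.

Program Definition rmod_comp {X Y Z : RModule} (g : rmod_hom Y Z) (f : rmod_hom X Y) :
  rmod_hom X Z := exist _ (proj1_sig g ∘ proj1_sig f) _.
Next Obligation.
  intros X Y Z [g Hg] [f Hf]; simpl.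
  rewrite <- comp_assoc, Hf, comp_assoc, Hg, <- comp_assoc, t_comp, comp_idl.
  reflexivity.
Qed.

Program Definition RMod : Category :=
  {| ob := RModule; hom := rmod_hom; idm := rmod_id; comp := @rmod_comp |}.
Next Obligation. intros. apply sig_eq; simpl. apply comp_idl. Qed.
Next Obligation. intros. apply sig_eq; simpl. apply comp_idr. Qed.
Next Obligation. intros. apply sig_eq; simpl. apply comp_assoc. Qed.

End Monoidal.

Arguments Algebra : clear implicits.
Arguments LMod {_} _.
Arguments RMod {_} _.

(** * The monads [A ⊗ -] and [- ⊗ A], and the free module functors *)

Section AlgebraMonads.
Context {M : MonoidalCategory} (A : Algebra M).
Let L := mlaws M.
Notation AA := (alg A).
Notation m := (amul A).
Notation u := (aunit A).

Lemma t_comp_r (a b c a' b' c' z : M) (f : hom a b) (g : hom b c)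
      (f' : hom a' b') (g' : hom b' c') (h : hom z (tens a a')) :
  tensm g g' ∘ (tensm f f' ∘ h) = tensm (g ∘ f) (g' ∘ f') ∘ h.
Proof. rewrite comp_assoc, t_comp. reflexivity. Qed.

Lemma t_split_r (a b c x : M) (f : hom a b) (g : hom b c) :
  tensm (idm x) (g ∘ f) = tensm (idm x) g ∘ tensm (idm x) f.
Proof. rewrite t_comp, comp_idl. reflexivity. Qed.

Lemma t_split_l (a b c x : M) (f : hom a b) (g : hom b c) :
  tensm (g ∘ f) (idm x) = tensm g (idm x) ∘ tensm f (idm x).
Proof. rewrite t_comp, comp_idl. reflexivity. Qed.

Lemma nat_inv {a b c d : M} (p : hom a b) (q : hom c d) (x : hom a c) (y : hom b d)
  (x' : hom c a) (y' : hom d b) :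
  y ∘ p = q ∘ x -> x ∘ x' = idm c -> y' ∘ y = idm b -> y' ∘ q = p ∘ x'.
Proof.
  intros H1 H2 H3. rewrite <- (comp_idr (y' ∘ q)), <- H2.
  rewrite comp_assoc, <- (comp_assoc y' q x), <- H1, comp_assoc, H3, comp_idl.
  reflexivity.
Qed.

Lemma ai_nat (a a' b b' c c' : M) (f : hom a a') (g : hom b b') (h : hom c c') :
  assoc_inv a' b' c' ∘ tensm f (tensm g h) = tensm (tensm f g) h ∘ assoc_inv a b c.
Proof.
  apply (nat_inv _ _ (assoc a b c) (assoc a' b' c')).
  - apply (assoc_nat L).
  - apply (assoc_invr L).
  - apply (assoc_invl L).
Qed.

Lemma li_nat (a b : M) (f : hom a b) :
  lunit_inv b ∘ f = tensm (idm (munit M)) f ∘ lunit_inv a.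
Proof.
  apply (nat_inv _ _ (lunit a) (lunit b)).
  - symmetry. apply (lunit_nat L).
  - apply (lunit_invr L).
  - apply (lunit_invl L).
Qed.

Lemma ri_nat (a b : M) (f : hom a b) :
  runit_inv b ∘ f = tensm f (idm (munit M)) ∘ runit_inv a.
Proof.
  apply (nat_inv _ _ (runit a) (runit b)).
  - symmetry. apply (runit_nat L).
  - apply (runit_invr L).
  - apply (runit_invl L).
Qed.

Lemma cancel_r {a b c : M} (x y : hom b c) (w : hom a b) (w' : hom b a) :
  w ∘ w' = idm b -> x ∘ w = y ∘ w -> x = y.
Proof.
  intros H1 H2. rewrite <- (comp_idr x), <- (comp_idr y), <- H1, !comp_assoc, H2.
  reflexivity.
Qed.

Ltac ra := repeat rewrite <- comp_assoc.
Ltac merge := repeat (rewrite ?t_comp_r, ?t_comp, ?comp_idl, ?comp_idr, ?t_id).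

Program Definition lfun : Functor M M :=
  {| fobj := fun X => tens AA X; fmap := fun X Y f => tensm (idm AA) f |}.
Next Obligation. intros. apply t_id. Qed.
Next Obligation. intros. apply t_split_r. Qed.

Definition l_eta (X : M) : hom X (tens AA X) := tensm u (idm X) ∘ lunit_inv X.
Definition l_mu (X : M) : hom (tens AA (tens AA X)) (tens AA X) :=
  tensm m (idm X) ∘ assoc_inv AA AA X.

Lemma l_eta_nat (a b : M) (f : hom a b) : fmap lfun f ∘ l_eta a = l_eta b ∘ f.
Proof.
  simpl; unfold l_eta. ra. rewrite li_nat. merge. reflexivity.
Qed.

Lemma l_mu_nat (a b : M) (f : hom a b) :
  fmap lfun f ∘ l_mu a = l_mu b ∘ fmap lfun (fmap lfun f).
Proof.
  simpl; unfold l_mu. ra. rewrite ai_nat. merge. reflexivity.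
Qed.

Lemma l_mu_assoc (X : M) : l_mu X ∘ fmap lfun (l_mu X) = l_mu X ∘ l_mu (lfun X).
Proof.
  simpl; unfold l_mu.
  set (W := assoc AA AA (tens AA X) ∘ assoc (tens AA AA) AA X).
  set (W' := assoc_inv (tens AA AA) AA X ∘ assoc_inv AA AA (tens AA X)).
  assert (HW : W ∘ W' = idm _).
  { unfold W, W'. ra. rewrite (comp_rew (assoc_invr L _ _ _)), comp_idl.
    apply (assoc_invr L). }
  apply (cancel_r _ _ W W' HW). unfold W. clear W W' HW.
  rewrite t_split_r. ra.
  rewrite (comp_rew (assoc_invl L _ _ _)), comp_idl.
  replace (idm (tens AA X)) with (tensm (idm AA) (idm X)) by apply t_id.
  rewrite !(comp_rew (ai_nat _ _ _ _ _ _ _ _ _)).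
  ra. rewrite (assoc_invl L), comp_idr.
  rewrite <- (pentagon L). ra.
  rewrite (comp_rew (t_comp _ _ _ _ _ _ _ _ (assoc AA AA X) (assoc_inv AA AA X))).
  rewrite (assoc_invl L), comp_idl, t_id, comp_idl.
  rewrite (comp_rew (assoc_invl L _ _ _)), comp_idl.
  merge. rewrite (amul_assoc A). ra. reflexivity.
Qed.

Lemma l_mu_etal (X : M) : l_mu X ∘ l_eta (lfun X) = idm (lfun X).
Proof.
  simpl; unfold l_mu, l_eta.
  replace (idm (tens AA X)) with (tensm (idm AA) (idm X)) by apply t_id.
  ra. rewrite (comp_rew (ai_nat _ _ _ _ _ _ _ _ _)).
  assert (H : assoc_inv (munit M) AA X ∘ lunit_inv (tens AA X)
              = tensm (lunit_inv AA) (idm X)).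
  { apply (inv_rel2 (assoc (munit M) AA X) (lunit (tens AA X)) (tensm (lunit AA) (idm X))).
    - apply (lunit_tens L).
    - apply (assoc_invr L).
    - apply (lunit_invr L).
    - rewrite t_comp, (lunit_invl L), comp_idl. apply t_id. }
  ra. rewrite H. merge. rewrite (amul_unitl A), (lunit_invr L), t_id. reflexivity.
Qed.

Lemma l_mu_etar (X : M) : l_mu X ∘ fmap lfun (l_eta X) = idm (lfun X).
Proof.
  simpl; unfold l_mu, l_eta.
  rewrite t_split_r. ra. rewrite (comp_rew (ai_nat _ _ _ _ _ _ _ _ _)).
  assert (H : assoc_inv AA (munit M) X ∘ tensm (idm AA) (lunit_inv X)
              = tensm (runit_inv AA) (idm X)).
  { apply (inv_rel2 (assoc AA (munit M) X) (tensm (idm AA) (lunit X))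
             (tensm (runit AA) (idm X))).
    - apply (triangle L).
    - apply (assoc_invr L).
    - rewrite t_comp, (lunit_invr L), comp_idl. apply t_id.
    - rewrite t_comp, (runit_invl L), comp_idl. apply t_id. }
  ra. rewrite H. merge. rewrite (amul_unitr A), (runit_invr L), t_id. reflexivity.
Qed.

(** The monad [(A ⊗ -)] on [C], with multiplication [m_A ⊗ id] and unit
    [u_A ⊗ id] (composed with the coherence isomorphisms, which are
    identities in the strict case). *)
Definition left_monad : Monad M :=
  {| mT := lfun; meta := l_eta; mmu := l_mu; meta_nat := l_eta_nat;
     mmu_nat := l_mu_nat; mmu_assoc := l_mu_assoc; mmu_etal := l_mu_etal;
     mmu_etar := l_mu_etar |}.

Program Definition rfun : Functor M M :=
  {| fobj := fun X => tens X AA; fmap := fun X Y f => tensm f (idm AA) |}.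
Next Obligation. intros. apply t_id. Qed.
Next Obligation. intros. apply t_split_l. Qed.

Definition r_eta (X : M) : hom X (tens X AA) := tensm (idm X) u ∘ runit_inv X.
Definition r_mu (X : M) : hom (tens (tens X AA) AA) (tens X AA) :=
  tensm (idm X) m ∘ assoc X AA AA.

Lemma r_eta_nat (a b : M) (f : hom a b) : fmap rfun f ∘ r_eta a = r_eta b ∘ f.
Proof.
  simpl; unfold r_eta. ra. rewrite ri_nat. merge. reflexivity.
Qed.

Lemma r_mu_nat (a b : M) (f : hom a b) :
  fmap rfun f ∘ r_mu a = r_mu b ∘ fmap rfun (fmap rfun f).
Proof.
  simpl; unfold r_mu. ra. rewrite (assoc_nat L). merge. reflexivity.
Qed.

Lemma r_mu_assoc (X : M) : r_mu X ∘ fmap rfun (r_mu X) = r_mu X ∘ r_mu (rfun X).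
Proof.
  simpl; unfold r_mu.
  rewrite t_split_l.
  replace (idm (tens X AA)) with (tensm (idm X) (idm AA)) by apply t_id.
  ra. rewrite !(comp_rew (assoc_nat L _ _ _)).
  ra. rewrite <- (pentagon L). ra.
  merge. rewrite (amul_assoc A). ra. reflexivity.
Qed.

Lemma r_mu_etal (X : M) : r_mu X ∘ r_eta (rfun X) = idm (rfun X).
Proof.
  simpl; unfold r_mu, r_eta.
  replace (idm (tens X AA)) with (tensm (idm X) (idm AA)) by apply t_id.
  ra. rewrite (comp_rew (assoc_nat L _ _ _)).
  assert (H : assoc X AA (munit M) ∘ runit_inv (tens X AA)
              = tensm (idm X) (runit_inv AA)).
  { apply (inv_rel1 (assoc X AA (munit M)) (tensm (idm X) (runit AA)) (runit (tens X AA))).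
    - apply (runit_tens L).
    - rewrite t_comp, (runit_invl L), comp_idl. apply t_id.
    - apply (runit_invr L). }
  ra. rewrite H. merge. rewrite (amul_unitr A), (runit_invr L), t_id. reflexivity.
Qed.

Lemma r_mu_etar (X : M) : r_mu X ∘ fmap rfun (r_eta X) = idm (rfun X).
Proof.
  simpl; unfold r_mu, r_eta.
  rewrite t_split_l. ra. rewrite (comp_rew (assoc_nat L _ _ _)).
  assert (H : assoc X (munit M) AA ∘ tensm (runit_inv X) (idm AA)
              = tensm (idm X) (lunit_inv AA)).
  { apply (inv_rel1 (assoc X (munit M) AA) (tensm (idm X) (lunit AA)) (tensm (runit X) (idm AA))).
    - apply (triangle L).
    - rewrite t_comp, (lunit_invl L), comp_idl. apply t_id.
    - rewrite t_comp, (runit_invr L), comp_idl. apply t_id. }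
  ra. rewrite H. merge. rewrite (amul_unitl A), (lunit_invr L), t_id. reflexivity.
Qed.

Definition right_monad : Monad M :=
  {| mT := rfun; meta := r_eta; mmu := r_mu; meta_nat := r_eta_nat;
     mmu_nat := r_mu_nat; mmu_assoc := r_mu_assoc; mmu_etal := r_mu_etal;
     mmu_etar := r_mu_etar |}.

Lemma free_lmod_assoc (X : M) :
  l_mu X ∘ tensm m (idm (tens AA X))
  = l_mu X ∘ tensm (idm AA) (l_mu X) ∘ assoc AA AA (tens AA X).
Proof.
  pose proof (l_mu_assoc X) as H. simpl in H. rewrite H.
  change (l_mu (tens AA X)) with (tensm m (idm (tens AA X)) ∘ assoc_inv AA AA (tens AA X)).
  ra. rewrite (assoc_invl L), comp_idr. reflexivity.
Qed.

Lemma free_lmod_unit (X : M) :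
  l_mu X ∘ tensm u (idm (tens AA X)) = lunit (tens AA X).
Proof.
  pose proof (l_mu_etal X) as H. simpl in H. unfold l_eta in H.
  rewrite <- (comp_idr (l_mu X ∘ _)), <- (lunit_invl L (tens AA X)), comp_assoc.
  rewrite <- (comp_assoc (l_mu X)), H, comp_idl. reflexivity.
Qed.

Definition free_lmod (X : M) : LModule A :=
  {| lmod := tens AA X; lact := l_mu X; lact_assoc := free_lmod_assoc X;
     lact_unit := free_lmod_unit X |}.

Program Definition free_lmod_hom (X Y : M) (f : hom X Y) :
  lmod_hom A (free_lmod X) (free_lmod Y) := exist _ (tensm (idm AA) f) _.
Next Obligation. intros X Y f; simpl. apply (l_mu_nat _ _ f). Qed.

Program Definition free_lmod_functor : Functor M (LMod A) :=
  {| fobj := free_lmod; fmap := free_lmod_hom |}.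
Next Obligation. intros X. apply sig_eq; simpl. apply t_id. Qed.
Next Obligation. intros. apply sig_eq; simpl. apply t_split_r. Qed.

Lemma free_rmod_assoc (X : M) :
  r_mu X ∘ tensm (idm (tens X AA)) m
  = r_mu X ∘ tensm (r_mu X) (idm AA) ∘ assoc_inv (tens X AA) AA AA.
Proof.
  pose proof (r_mu_assoc X) as H. simpl in H. rewrite H.
  change (r_mu (tens X AA)) with (tensm (idm (tens X AA)) m ∘ assoc (tens X AA) AA AA).
  ra. rewrite (assoc_invr L), comp_idr. reflexivity.
Qed.

Lemma free_rmod_unit (X : M) :
  r_mu X ∘ tensm (idm (tens X AA)) u = runit (tens X AA).
Proof.
  pose proof (r_mu_etal X) as H. simpl in H. unfold r_eta in H.
  rewrite <- (comp_idr (r_mu X ∘ _)), <- (runit_invl L (tens X AA)), comp_assoc.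
  rewrite <- (comp_assoc (r_mu X)), H, comp_idl. reflexivity.
Qed.

Definition free_rmod (X : M) : RModule A :=
  {| rmod := tens X AA; ract := r_mu X; ract_assoc := free_rmod_assoc X;
     ract_unit := free_rmod_unit X |}.

Program Definition free_rmod_hom (X Y : M) (f : hom X Y) :
  rmod_hom A (free_rmod X) (free_rmod Y) := exist _ (tensm f (idm AA)) _.
Next Obligation. intros X Y f; simpl. apply (r_mu_nat _ _ f). Qed.

Program Definition free_rmod_functor : Functor M (RMod A) :=
  {| fobj := free_rmod; fmap := free_rmod_hom |}.
Next Obligation. intros X. apply sig_eq; simpl. apply t_id. Qed.
Next Obligation. intros. apply sig_eq; simpl. apply t_split_l. Qed.

End AlgebraMonads.

(** * Monadic and essential division algebras *)

Definition several_module_classes {M : MonoidalCategory} (A : Algebra M) : Prop :=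
  (exists X Y : LMod A, ~ isomorphic X Y) /\ (exists X Y : RMod A, ~ isomorphic X Y).

Definition left_monadic_division {M : MonoidalCategory} (A : Algebra M) : Prop :=
  several_module_classes A /\ adjunction_trivial (left_monad A).

Definition right_monadic_division {M : MonoidalCategory} (A : Algebra M) : Prop :=
  several_module_classes A /\ adjunction_trivial (right_monad A).

Definition left_essential_division {M : MonoidalCategory} (A : Algebra M) : Prop :=
  several_module_classes A /\ essentially_surjective (free_lmod_functor A).

Definition right_essential_division {M : MonoidalCategory} (A : Algebra M) : Prop :=
  several_module_classes A /\ essentially_surjective (free_rmod_functor A).

From Stdlib Require Import ClassicalEpsilon ProofIrrelevance.

(* The comparison functor from the Kleisli category is always fully faithful,
   so (with choice) it is an equivalence exactly when it is essentially
   surjective.  Left A-modules are literally the Eilenberg–Moore algebras of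
   A ⊗ -, and the free Eilenberg–Moore algebra on X is the free module A ⊗ X;
   hence essential surjectivity of the comparison functor is essential
   surjectivity of the free module functor.  The right-hand case is the mirror
   image. *)

Definition fully_faithful {C D : Category} (F : Functor C D) : Prop :=
  forall a b : C, exists pre : hom (F a) (F b) -> hom a b,
    (forall f, fmap F (pre f) = f) /\ (forall g, pre (fmap F g) = g).

Section FullyFaithfulEssentiallySurjective.
Context {C D : Category} (F : Functor C D).
Variable pre : forall a b : C, hom (F a) (F b) -> hom a b.
Hypothesis fmap_pre : forall a b f, fmap F (pre a b f) = f.
Hypothesis pre_fmap : forall a b g, pre a b (fmap F g) = g.
Variable preimage : D -> C.
Variables (phi : forall d, hom (F (preimage d)) d) (psi : forall d, hom d (F (preimage d))).
Hypothesis psi_phi : forall d, psi d ∘ phi d = idm _.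
Hypothesis phi_psi : forall d, phi d ∘ psi d = idm _.

Lemma pre_comp (a b c : C) (g : hom (F b) (F c)) (f : hom (F a) (F b)) :
  pre _ _ (g ∘ f) = pre _ _ g ∘ pre _ _ f.
Proof. rewrite <- (fmap_pre _ _ g), <- (fmap_pre _ _ f), <- fmap_comp, !pre_fmap. reflexivity. Qed.

Lemma pre_id (a : C) : pre a a (idm _) = idm a.
Proof. rewrite <- fmap_id. apply pre_fmap. Qed.

Program Definition quasi_inverse : Functor D C :=
  {| fobj := preimage; fmap := fun d e g => pre _ _ (psi e ∘ g ∘ phi d) |}.
Next Obligation. rewrite comp_idr, psi_phi. apply pre_id. Qed.
Next Obligation.
  rewrite <- pre_comp. f_equal.
  rewrite !comp_assoc, <- (comp_assoc _ (phi _) (psi _)), phi_psi, comp_idr.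
  reflexivity.
Qed.

Lemma is_equivalence_of_quasi_inverse : is_equivalence F.
Proof.
  exists quasi_inverse. split.
  - exists (fun a => pre _ _ (phi (F a))). split.
    + intros a b f; simpl. rewrite <- (pre_fmap _ _ f) at 1. rewrite <- !pre_comp.
      f_equal. rewrite !comp_assoc, phi_psi, comp_idl. reflexivity.
    + intros a. exists (pre _ _ (psi (F a))).
      rewrite <- !pre_comp, psi_phi, phi_psi, !pre_id. split; reflexivity.
  - exists phi. split.
    + intros d e g; simpl. rewrite fmap_pre, !comp_assoc, phi_psi, comp_idl. reflexivity.
    + intros d. exists (psi d). split; auto.
Qed.

End FullyFaithfulEssentiallySurjective.

Lemma is_equivalence_of_fully_faithful {C D : Category} (F : Functor C D) :
  fully_faithful F -> essentially_surjective F -> is_equivalence F.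
Proof.
  intros FF ES.
  assert (pick_pre : forall a b, {pre : hom (F a) (F b) -> hom a b |
            (forall f, fmap F (pre f) = f) /\ (forall g, pre (fmap F g) = g)})
    by (intros a b; apply constructive_indefinite_description, FF).
  assert (pick_iso : forall d, {c : C & {p : hom (F c) d * hom d (F c) |
            snd p ∘ fst p = idm _ /\ fst p ∘ snd p = idm _}}).
  { intros d. destruct (constructive_indefinite_description _ (ES d)) as [c Hc].
    exists c. apply constructive_indefinite_description.
    destruct Hc as [f [g [Hgf Hfg]]]. exists (f, g). auto. }
  apply (is_equivalence_of_quasi_inverse F (fun a b => proj1_sig (pick_pre a b))
           (fun a b => proj1 (proj2_sig (pick_pre a b)))
           (fun a b => proj2 (proj2_sig (pick_pre a b)))
           (fun d => projT1 (pick_iso d))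
           (fun d => fst (proj1_sig (projT2 (pick_iso d))))
           (fun d => snd (proj1_sig (projT2 (pick_iso d))))).
  - intros d. exact (proj1 (proj2_sig (projT2 (pick_iso d)))).
  - intros d. exact (proj2 (proj2_sig (projT2 (pick_iso d)))).
Qed.

Lemma is_equivalence_essentially_surjective {C D : Category} (F : Functor C D) :
  is_equivalence F -> essentially_surjective F.
Proof. intros [G [_ [eps [_ eps_iso]]]] d. exists (G d), (eps d). apply eps_iso. Qed.

Lemma fmap_isomorphic {C D : Category} (F : Functor C D) (a b : C) :
  isomorphic a b -> isomorphic (F a) (F b).
Proof.
  intros [f [g [Hgf Hfg]]]. exists (fmap F f), (fmap F g).
  rewrite <- !fmap_comp, Hgf, Hfg, !fmap_id. split; reflexivity.
Qed.

Lemma essentially_surjective_transport {C C' D D' : Category} (F : Functor C D)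
  (G : Functor C' D') (o : C -> C') (Phi : Functor D D') (Psi : Functor D' D) :
  (forall c, Phi (F c) = G (o c)) -> (forall d, Phi (Psi d) = d) ->
  essentially_surjective F -> essentially_surjective G.
Proof.
  intros PhiF PhiPsi ES d. destruct (ES (Psi d)) as [c Hc]. exists (o c).
  rewrite <- PhiF, <- (PhiPsi d). apply fmap_isomorphic, Hc.
Qed.

Lemma comparison_fully_faithful {C : Category} (T : Monad C) :
  fully_faithful (comparison T).
Proof.
  intros a b. exists (fun g : em_hom T (free_em T a) (free_em T b) => proj1_sig g ∘ meta T a).
  split.
  - intros [g Hg]. apply sig_eq; simpl in *.
    rewrite fmap_comp, comp_assoc, <- Hg, <- comp_assoc, mmu_etar, comp_idr.
    reflexivity.
  - intros f; simpl.
    rewrite <- comp_assoc, meta_nat, comp_assoc, mmu_etal, comp_idl. reflexivity.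
Qed.

Lemma adjunction_trivial_iff {C : Category} (T : Monad C) :
  adjunction_trivial T <-> essentially_surjective (comparison T).
Proof.
  split.
  - apply is_equivalence_essentially_surjective.
  - apply is_equivalence_of_fully_faithful, comparison_fully_faithful.
Qed.

Lemma Build_EMAlg_irrel {C : Category} (T : Monad C) (X : C) (act : hom (T X) X) p q p' q' :
  Build_EMAlg T X act p q = Build_EMAlg T X act p' q'.
Proof. f_equal; apply proof_irrelevance. Qed.

Section ModulesAsAlgebras.
Context {M : MonoidalCategory} (A : Algebra M).
Let L := mlaws M.

Program Definition em_of_lmod (X : LModule A) : EMAlg (left_monad A) :=
  {| em_ob := lmod A X; em_act := lact A X |}.
Next Obligation.
  simpl; unfold l_eta. rewrite comp_assoc, lact_unit. apply (lunit_invr L).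
Qed.
Next Obligation.
  simpl; unfold l_mu.
  rewrite comp_assoc, lact_assoc, <- comp_assoc, (assoc_invr L), comp_idr.
  reflexivity.
Qed.

Program Definition lmod_of_em (P : EMAlg (left_monad A)) : LModule A :=
  {| lmod := em_ob _ P; lact := em_act _ P |}.
Next Obligation.
  pose proof (em_assoc _ P) as act_assoc; simpl in act_assoc; unfold l_mu in act_assoc.
  rewrite act_assoc, <- !comp_assoc, (assoc_invl L), comp_idr. reflexivity.
Qed.
Next Obligation.
  pose proof (em_unit _ P) as act_unit; simpl in act_unit; unfold l_eta in act_unit.
  transitivity (em_act _ P ∘ (tensm (aunit A) (idm _) ∘ lunit_inv _) ∘ lunit _).
  - rewrite <- !comp_assoc, (lunit_invl L), comp_idr. reflexivity.
  - exact (eq_trans (f_equal (fun h => h ∘ lunit _) act_unit) (comp_idl _)).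
Qed.

(* Module morphisms and algebra morphisms satisfy definitionally the same
   condition, so these functors are the identity on morphisms. *)
Program Definition em_of_lmod_functor : Functor (LMod A) (EilenbergMoore (left_monad A)) :=
  {| fobj := em_of_lmod; fmap := fun X Y f => f |}.
Next Obligation. apply sig_eq. reflexivity. Qed.
Next Obligation. apply sig_eq. reflexivity. Qed.

Program Definition lmod_of_em_functor : Functor (EilenbergMoore (left_monad A)) (LMod A) :=
  {| fobj := lmod_of_em; fmap := fun P Q f => f |}.
Next Obligation. apply sig_eq. reflexivity. Qed.
Next Obligation. apply sig_eq. reflexivity. Qed.

Lemma Build_LModule_irrel (X : M) (act : hom (tens (alg A) X) X) p q p' q' :
  Build_LModule A X act p q = Build_LModule A X act p' q'.
Proof. f_equal; apply proof_irrelevance. Qed.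

Lemma comparison_essentially_surjective_iff_free_lmod :
  essentially_surjective (comparison (left_monad A)) <->
  essentially_surjective (free_lmod_functor A).
Proof.
  split.
  - apply (essentially_surjective_transport (comparison (left_monad A))
             (free_lmod_functor A) (fun X => X) lmod_of_em_functor em_of_lmod_functor).
    + intros X. apply Build_LModule_irrel.
    + intros []. apply Build_LModule_irrel.
  - apply (essentially_surjective_transport (free_lmod_functor A)
             (comparison (left_monad A)) (fun X => X) em_of_lmod_functor lmod_of_em_functor).
    + intros X. apply Build_EMAlg_irrel.
    + intros []. apply Build_EMAlg_irrel.
Qed.

Program Definition em_of_rmod (X : RModule A) : EMAlg (right_monad A) :=
  {| em_ob := rmod A X; em_act := ract A X |}.
Next Obligation.
  simpl; unfold r_eta. rewrite comp_assoc, ract_unit. apply (runit_invr L).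
Qed.
Next Obligation.
  simpl; unfold r_mu.
  rewrite comp_assoc, ract_assoc, <- comp_assoc, (assoc_invl L), comp_idr.
  reflexivity.
Qed.

Program Definition rmod_of_em (P : EMAlg (right_monad A)) : RModule A :=
  {| rmod := em_ob _ P; ract := em_act _ P |}.
Next Obligation.
  pose proof (em_assoc _ P) as act_assoc; simpl in act_assoc; unfold r_mu in act_assoc.
  rewrite act_assoc, <- !comp_assoc, (assoc_invr L), comp_idr. reflexivity.
Qed.
Next Obligation.
  pose proof (em_unit _ P) as act_unit; simpl in act_unit; unfold r_eta in act_unit.
  transitivity (em_act _ P ∘ (tensm (idm _) (aunit A) ∘ runit_inv _) ∘ runit _).
  - rewrite <- !comp_assoc, (runit_invl L), comp_idr. reflexivity.
  - exact (eq_trans (f_equal (fun h => h ∘ runit _) act_unit) (comp_idl _)).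
Qed.

Program Definition em_of_rmod_functor : Functor (RMod A) (EilenbergMoore (right_monad A)) :=
  {| fobj := em_of_rmod; fmap := fun X Y f => f |}.
Next Obligation. apply sig_eq. reflexivity. Qed.
Next Obligation. apply sig_eq. reflexivity. Qed.

Program Definition rmod_of_em_functor : Functor (EilenbergMoore (right_monad A)) (RMod A) :=
  {| fobj := rmod_of_em; fmap := fun P Q f => f |}.
Next Obligation. apply sig_eq. reflexivity. Qed.
Next Obligation. apply sig_eq. reflexivity. Qed.

Lemma Build_RModule_irrel (X : M) (act : hom (tens X (alg A)) X) p q p' q' :
  Build_RModule A X act p q = Build_RModule A X act p' q'.
Proof. f_equal; apply proof_irrelevance. Qed.

Lemma comparison_essentially_surjective_iff_free_rmod :
  essentially_surjective (comparison (right_monad A)) <->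
  essentially_surjective (free_rmod_functor A).
Proof.
  split.
  - apply (essentially_surjective_transport (comparison (right_monad A))
             (free_rmod_functor A) (fun X => X) rmod_of_em_functor em_of_rmod_functor).
    + intros X. apply Build_RModule_irrel.
    + intros []. apply Build_RModule_irrel.
  - apply (essentially_surjective_transport (free_rmod_functor A)
             (comparison (right_monad A)) (fun X => X) em_of_rmod_functor rmod_of_em_functor).
    + intros X. apply Build_EMAlg_irrel.
    + intros []. apply Build_EMAlg_irrel.
Qed.

End ModulesAsAlgebras.

Theorem proposition4p3 :
  forall (M : MonoidalCategory), is_strict M ->
  forall (A : Algebra M), several_module_classes A ->
    (left_monadic_division A <-> left_essential_division A) /\
    (right_monadic_division A <-> right_essential_division A).
Proof.
  intros M _ A _.
  unfold left_monadic_division, left_essential_division,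
    right_monadic_division, right_essential_division.
  rewrite !adjunction_trivial_iff, comparison_essentially_surjective_iff_free_lmod,
    comparison_essentially_surjective_iff_free_rmod.
  tauto.
Qed.
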